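(* There exist a set $\mathcal{X}$, a family of groups $\mathcal{G} \subseteq \{0,1\}^{\mathcal{X}}$ and a hypothesis class $\mathcal{H} \subseteq \{-1,+1\}^{\mathcal{X}}$, with both $\mathcal{G}$ and $\mathcal{H}$ of finite VC dimension, such that the class $\mathcal{C}(\mathcal{G},\mathcal{H})$ of group-realizable concepts has infinite VC dimension.
   Context: A group $g \in \mathcal{G}$ is identified both with a function $g\colon \mathcal{X}\to\{0,1\}$ and with the subset $\{x : g(x)=1\}\subseteq \mathcal{X}$. Given $\mathcal{G}\subseteq\{0,1\}^{\mathcal{X}}$ and $\mathcal{H}\subseteq\{-1,+1\}^{\mathcal{X}}$ on the same domain $\mathcal{X}$, the set of group-realizable concepts $\mathcal{C}(\mathcal{G},\mathcal{H})\subseteq\{-1,+1\}^{\mathcal{X}}$ is the set of all functions $c\colon\mathcal{X}\to\{-1,+1\}$ such that for each $g\in\mathcal{G}$ there exists $h\in\mathcal{H}$ with $c(x)=h(x)$ for all $x\in g$. *)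

From Stdlib Require Import List.
Import ListNotations.

Inductive pm1 : Type := Mone | Pone.

Definition fclass (X Y : Type) := (X -> Y) -> Prop.

Definition shatters {X Y : Type} (F : fclass X Y) (S : list X) : Prop :=
  forall l : X -> Y, exists f, F f /\ forall x, In x S -> f x = l x.

Definition finite_VC {X Y : Type} (F : fclass X Y) : Prop :=
  exists d : nat, forall S : list X, NoDup S -> shatters F S -> length S <= d.

Definition infinite_VC {X Y : Type} (F : fclass X Y) : Prop :=
  forall n : nat, exists S : list X, NoDup S /\ length S = n /\ shatters F S.

(* Group-realizable concepts C(G,H). A group g : X -> bool is identified
   with the set {x | g x = true}. *)
Definition group_realizable {X : Type} (G : fclass X bool) (H : fclass X pm1)
  : fclass X pm1 :=
  fun c => forall g, G g -> exists h, H h /\ forall x, g x = true -> c x = h x.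

(* Take X = nat, let the groups be the singletons {x} and let H consist of the
   two constant labelings. Neither class shatters a pair of distinct points,
   but every concept agrees with a constant on each singleton, so C(G,H) is
   the class of all labelings and shatters every finite set. *)

From Stdlib Require Import List Arith Lia.
Import ListNotations.

Lemma shatters_incl {X Y : Type} (F : fclass X Y) (S T : list X) :
  incl T S -> shatters F S -> shatters F T.
Proof.
  intros HTS HS l.
  destruct (HS l) as [f [Hf Hfl]].
  exists f; split; [exact Hf|].
  intros x Hx; apply Hfl, HTS, Hx.
Qed.

Lemma finite_VC_no_shattered_pair {X Y : Type} (F : fclass X Y) :
  (forall a b, a <> b -> ~ shatters F [a; b]) -> finite_VC F.
Proof.
  intros Hpair; exists 1.
  intros [|a [|b S]] HN HS; simpl; try lia.
  exfalso; apply (Hpair a b).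
  - intros ->; inversion HN as [|? ? Hnin]; apply Hnin; simpl; auto.
  - apply (shatters_incl F (a :: b :: S)); [|exact HS].
    intros x [<-|[<-|[]]]; simpl; auto.
Qed.

Lemma infinite_VC_full_nat {Y : Type} (F : fclass nat Y) :
  (forall f, F f) -> infinite_VC F.
Proof.
  intros Hfull n; exists (seq 0 n).
  split; [apply seq_NoDup|split; [apply length_seq|]].
  intros l; exists l; auto.
Qed.

Definition singletons : fclass nat bool :=
  fun g => exists x, g = fun y => Nat.eqb y x.

Definition constants {X : Type} : fclass X pm1 :=
  fun h => exists v, h = fun _ => v.

Lemma singletons_no_shattered_pair (a b : nat) :
  a <> b -> ~ shatters singletons [a; b].
Proof.
  intros Hab HS.
  destruct (HS (fun _ => true)) as [g [[x ->] Hg]].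
  pose proof (Hg a ltac:(simpl; auto)) as Ha; apply Nat.eqb_eq in Ha as ->.
  apply Hab; symmetry; apply Nat.eqb_eq, (Hg b); simpl; auto.
Qed.

Lemma constants_no_shattered_pair (a b : nat) :
  a <> b -> ~ shatters constants [a; b].
Proof.
  intros Hab HS.
  destruct (HS (fun y => if Nat.eqb y a then Mone else Pone)) as [h [[v ->] Hh]].
  pose proof (Hh a ltac:(simpl; auto)) as Ha.
  pose proof (Hh b ltac:(simpl; auto)) as Hb.
  rewrite Nat.eqb_refl in Ha.
  rewrite (proj2 (Nat.eqb_neq b a)) in Hb by (intros ->; now apply Hab).
  congruence.
Qed.

Lemma group_realizable_singletons_constants (c : nat -> pm1) :
  group_realizable singletons constants c.
Proof.
  intros g [x ->].
  exists (fun _ => c x); split; [now exists (c x)|].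
  intros y Hy; apply Nat.eqb_eq in Hy as ->; reflexivity.
Qed.

Theorem mainTheorem1 :
  exists (X : Type) (G : fclass X bool) (H : fclass X pm1),
    finite_VC G /\ finite_VC H /\ infinite_VC (group_realizable G H).
Proof.
  exists nat, singletons, constants.
  split; [|split].
  - apply finite_VC_no_shattered_pair, singletons_no_shattered_pair.
  - apply finite_VC_no_shattered_pair, constants_no_shattered_pair.
  - apply infinite_VC_full_nat, group_realizable_singletons_constants.
Qed.
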